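(* Let $p,q\in\mathbb{N}$ and let $T=(T_{i,j})_{i,j\in\mathbb{N}_0}$ be a semi-infinite complex matrix with band structure $T_{i,j}=0$ whenever $j<i-p$ or $j>i+q$. For $N\in\mathbb{N}_0$ let $T^{[N]}=(T_{i,j})_{0\le i,j\le N}$ be its principal truncation of size $N+1$. Let $\nu\in\mathbb{C}^{p\times p}$ and $\xi\in\mathbb{C}^{q\times q}$ be invertible lower triangular matrices. Fix $a\in\{1,\dots,p\}$ and $b\in\{1,\dots,q\}$, and define the semi-infinite column vector $u_a^\nu$ whose entries with indices $0,\dots,p-1$ are the entries of $\nu^{-\top}e_a^{[p]}$ and whose remaining entries are $0$, and the semi-infinite row vector $u_b^\xi$ whose entries with indices $0,\dots,q-1$ are the entries of $(e_b^{[q]})^\top\xi^{-1}$ and whose remaining entries are $0$ (here $e_a^{[p]}$, $e_b^{[q]}$ are standard basis vectors of $\mathbb{C}^p$, $\mathbb{C}^q$). Let $e_a^\nu\in\mathbb{C}^{N+1}$ and $e_b^\xi\in\mathbb{C}^{N+1}$ denote the vectors formed by the entries with indices $0,\dots,N$ of $u_a^\nu$ and of $(u_b^\xi)^\top$, respectively. Define \[ d_{b,a}(N)\coloneq\left\lceil\frac{N+2-a}{p}\right\rceil+\left\lceil\frac{N+2-b}{q}\right\rceil-1 . \] Then for every $n\in\mathbb{N}_0$ and every $N\in\mathbb{N}_0$ with $n\le d_{b,a}(N)$, \[ u_b^\xi\,T^n\,u_a^\nu=(e_b^\xi)^\top\bigl(T^{[N]}\bigr)^n e_a^\nu . \]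
   Context: Powers $T^n$ of the banded semi-infinite matrix are defined by ordinary matrix multiplication (all sums involved are finite because of the band structure), with $T^0=I$. Since $\nu$ is lower triangular, $\nu^{-\top}e_a^{[p]}$ is supported in indices $\{0,\dots,a-1\}$, and $(e_b^{[q]})^\top\xi^{-1}$ is supported in indices $\{0,\dots,b-1\}$, so $u_b^\xi T^n u_a^\nu$ is a finite sum. *)

From HB Require Import structures.
From mathcomp Require Import all_boot all_order all_algebra.
From mathcomp Require Import complex.
From Stdlib Require Rdefinitions.
From mathcomp Require Import Rstruct.
Set Implicit Arguments. Unset Strict Implicit. Unset Printing Implicit Defensive.
Import Order.TTheory GRing.Theory Num.Theory.
Local Open Scope ring_scope.

Notation C := (Rdefinitions.R)[i].

Definition smx := nat -> nat -> C.

Definition banded (p q : nat) (T : smx) : Prop :=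
  forall i j : nat, ((j + p < i)%N \/ (i + q < j)%N) -> T i j = 0.

(* powers of a (q-upper-banded) semi-infinite matrix by ordinary matrix
   multiplication; row i of T vanishes beyond column i+q, so the sum over
   k < i+q+1 is the full (finite) sum.  T^0 = I. *)
Fixpoint spow (q : nat) (T : smx) (n : nat) : smx :=
  match n with
  | 0 => fun i j => (i == j)%:R
  | n'.+1 => fun i j => \sum_(k < i + q + 1) T i k * spow q T n' k j
  end.

Definition trunc (T : smx) (N : nat) : 'M[C]_(N.+1) :=
  \matrix_(i < N.+1, j < N.+1) T i j.

(* semi-infinite vector u_a^nu : entries 0..p-1 are those of nu^{-T} e_a,
   i.e. entry k is (nu^{-1})_{a,k}; other entries are 0.  Same formula gives
   the row vector u_b^xi : entry k is (e_b^T xi^{-1})_k = (xi^{-1})_{b,k}. *)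
Definition uvec (p : nat) (nu : 'M[C]_p) (a : 'I_p) (k : nat) : C :=
  oapp (fun k' : 'I_p => invmx nu a k') 0 (insub k).

Definition vtrunc (u : nat -> C) (N : nat) : 'cV[C]_(N.+1) :=
  \col_(i < N.+1) u i.

Definition ceil_div (x : int) (m : nat) : int := - ((- x) %/ m%:Z)%Z.

(* d_{b,a}(N) = ceil((N+2-a)/p) + ceil((N+2-b)/q) - 1, with a, b 1-based *)
Definition dba (p q : nat) (a b N : nat) : int :=
  ceil_div (N%:Z + 2 - a%:Z) p + ceil_div (N%:Z + 2 - b%:Z) q - 1.

From HB Require Import structures.
From mathcomp Require Import all_boot all_order all_algebra.
From mathcomp Require Import complex.
From Stdlib Require Rdefinitions.
From mathcomp Require Import Rstruct.
From mathcomp Require Import zify.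
Set Implicit Arguments. Unset Strict Implicit. Unset Printing Implicit Defensive.
Import Order.TTheory GRing.Theory Num.Theory.
Local Open Scope ring_scope.

(* Write y = u_a^nu and x = u_b^xi; as nu^-1 and xi^-1 are lower triangular,
   y is supported on {0..a} and x on {0..b}.  Since T has lower bandwidth p,
   T^j y is supported on {0..a+jp}, so the first K = (N-a)/p + 1 applications
   of T^[N] lose nothing.  Afterwards, since T has upper bandwidth q, each
   further step corrupts at most q more entries at the bottom of the truncated
   vector: after n >= K steps, (T^[N])^n y still agrees with T^n y on the
   indices i with i + (n-K)q <= N.  The bound n <= d_{b,a}(N) says exactly
   that this range contains the support {0..b} of x. *)

Lemma big_ord_supp (V : nmodType) (F : nat -> V) (s m : nat) : (s <= m)%N ->
  (forall k, (s <= k)%N -> (k < m)%N -> F k = 0) ->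
  \sum_(k < m) F k = \sum_(k < s) F k.
Proof.
move=> le_sm F0; rewrite (big_ord_widen _ _ le_sm) [RHS]big_mkcond /=.
by apply: eq_bigr => k _; case: ltnP => // /F0 -> //.
Qed.

Lemma is_trig_invmx (R : fieldType) n (A : 'M[R]_n) :
  is_trig_mx A -> A \in unitmx -> is_trig_mx (invmx A).
Proof.
move=> trigA unitA; have Alow := elimT is_trig_mxP trigA; apply/is_trig_mxP.
have Adiag_neq0 (k : 'I_n) : A k k != 0.
  apply: contraTneq unitA => Akk0.
  by rewrite unitmxE det_trig // (bigD1 k) //= Akk0 mul0r unitr0.
suff H m (i j : 'I_n) : i = m :> nat -> (i < j)%N -> invmx A i j = 0.
  by move=> i j; apply: H.
elim/ltn_ind: m i => m IH i eq_im lt_ij; subst m.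
have := congr1 (fun M : 'M[R]_n => M i j) (mulmxV unitA).
rewrite /= !mxE (bigD1 i) //= big1 ?addr0.
  rewrite -val_eqE /= (ltn_eqF lt_ij) => /eqP.
  by rewrite mulf_eq0 (negbTE (Adiag_neq0 i)) => /eqP.
move=> k neq_ki; case: (ltngtP i k) => [lt_ik|lt_ki|eq_ik].
- by rewrite Alow // mul0r.
- by rewrite (IH k) ?mulr0 // (ltn_trans lt_ki lt_ij).
- by move: neq_ki; rewrite (val_inj eq_ik) eqxx.
Qed.

Lemma uvec_eq0 p (nu : 'M[C]_p) (a : 'I_p) :
  is_trig_mx nu -> nu \in unitmx -> forall k, (a < k)%N -> uvec nu a k = 0.
Proof.
move=> trig_nu unit_nu k lt_ak; rewrite /uvec; case: insubP => //= k' _ val_k'.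
by move/is_trig_mxP: (is_trig_invmx trig_nu unit_nu); apply; rewrite val_k'.
Qed.

Definition nsteps (p s N : nat) : nat := if (s <= N)%N then ((N - s) %/ p).+1 else 0.

Lemma ltn_nsteps p s N j : (0 < p)%N -> (j < nsteps p s N)%N = (s + j * p <= N)%N.
Proof.
move=> p_gt0; rewrite /nsteps; case: (leqP s N) => [le_sN|lt_Ns].
  by rewrite ltnS leq_divRL // -(leq_add2l s) subnKC.
by apply/esym/negbTE; rewrite -ltnNge (leq_trans lt_Ns) ?leq_addr.
Qed.

Lemma ceil_div_le_nsteps p s N : (0 < p)%N ->
  ceil_div (N%:Z + 2 - s.+1%:Z) p <= (nsteps p s N)%:Z.
Proof.
move=> p_gt0; rewrite /ceil_div /nsteps.
have p_pos : 0 < p%:Z by rewrite ltz_nat.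
set y := - _; have := divz_eq y p; have := modz_ge0 y (lt0r_neq0 p_pos).
have := ltz_pmod y p_pos; have := divn_eq (N - s) p; have := ltn_pmod (N - s) p_gt0.
rewrite /y; case: ifP; nia.
Qed.

Definition sapp (q : nat) (T : smx) (v : nat -> C) : nat -> C :=
  fun i => \sum_(k < i + q + 1) T i k * v k.

Definition tapp (N : nat) (T : smx) (v : nat -> C) : nat -> C :=
  fun i => \sum_(k < N.+1) T i k * v k.

Lemma spow_mulv p q T (y : nat -> C) : (forall k, (p <= k)%N -> y k = 0) ->
  forall n i, \sum_(j < p) spow q T n i j * y j = iter n (sapp q T) y i.
Proof.
move=> y0; elim=> [|n IH] i /=.
  have [lt_ip|le_pi] := ltnP i p.
    rewrite (bigD1 (Ordinal lt_ip)) //= eqxx mul1r big1 ?addr0 // => k.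
    by rewrite -val_eqE /= eq_sym => /negbTE ->; rewrite mul0r.
  rewrite y0 // big1 // => k _.
  by rewrite gtn_eqF ?mul0r // (leq_trans (ltn_ord k) le_pi).
rewrite /sapp; under eq_bigr do rewrite mulr_suml.
rewrite exchange_big /=; apply: eq_bigr => k _; rewrite -IH mulr_sumr.
by apply: eq_bigr => j _; rewrite mulrA.
Qed.

Lemma trunc_exp_mul_vtrunc T N (v : nat -> C) n :
  trunc T N ^+ n *m vtrunc v N = vtrunc (iter n (tapp N T) v) N.
Proof.
elim: n => [|n IH]; first by rewrite expr0 mul1mx.
rewrite exprS -mulmxE -mulmxA IH; apply/matrixP => i j.
by rewrite !mxE; apply: eq_bigr => k _; rewrite !mxE.
Qed.

Definition trunc_agree (b N : nat) (z w : nat -> C) : Prop :=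
  forall k, (k <= b)%N -> z k = if (k <= N)%N then w k else 0.

Lemma sum_mul_trunc_agree (x z w : nat -> C) b m N :
  (forall k, (b < k)%N -> x k = 0) -> (b < m)%N -> trunc_agree b N z w ->
  \sum_(k < m) x k * z k = \sum_(k < N.+1) x k * w k.
Proof.
move=> x0 lt_bm zw; pose f k := x k * (if (k <= N)%N then w k else 0).
have f0 k : (minn b N < k)%N -> f k = 0.
  by rewrite gtn_min /f => /orP[/x0 ->|/ltn_geF ->]; rewrite ?mul0r ?mulr0.
transitivity (\sum_(k < m) f k).
  apply: eq_bigr => k _; rewrite /f.
  by have [/zw ->|/x0 ->] := leqP k b; rewrite ?mul0r.
transitivity (\sum_(k < N.+1) f k); last first.
  by apply: eq_bigr => k _; rewrite /f -ltnS ltn_ord.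
have lt_min_m : (minn b N < m)%N := leq_ltn_trans (geq_minl b N) lt_bm.
have lt_min_N : (minn b N < N.+1)%N by rewrite ltnS geq_minr.
by rewrite (big_ord_supp lt_min_m) 1?(big_ord_supp lt_min_N) // => k /f0.
Qed.

Section BandedIterates.

Variables (p q : nat) (T : smx).
Hypothesis bandT : banded p q T.

Lemma iter_sapp_eq0 (y : nat -> C) s : (forall k, (s < k)%N -> y k = 0) ->
  forall j k, (s + j * p < k)%N -> iter j (sapp q T) y k = 0.
Proof.
move=> y0; elim=> [|j IH] k /=; first by rewrite mul0n addn0; apply: y0.
move=> lt_k; rewrite /sapp big1 // => l _.
have [lt_l|le_l] := ltnP (s + j * p) l; first by rewrite IH ?mulr0.
by rewrite bandT ?mul0r //; left; rewrite mulSn in lt_k; lia.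
Qed.

Variables (y : nat -> C) (N K : nat).
Hypothesis supp_y : forall j k, (j < K)%N -> (N < k)%N -> iter j (sapp q T) y k = 0.

Lemma iter_trunc_agree j b : (j < K)%N || (b + (j - K) * q <= N)%N ->
  trunc_agree b N (iter j (sapp q T) y) (iter j (tapp N T) y).
Proof.
elim: j b => [|j IH] b jb k le_kb /=.
  case: leqP => // lt_Nk; apply: (supp_y (j := 0)) => //.
  by move: jb; rewrite sub0n mul0n addn0; lia.
case: leqP => [le_kN|lt_Nk]; last first.
  suff lt_jK : (j.+1 < K)%N by exact: supp_y lt_jK lt_Nk.
  by move: jb; case: ltnP => //= _ /(leq_trans (leq_addr _ _)) le_bN; lia.
apply: (sum_mul_trunc_agree (b := k + q)).
- by move=> l lt_l; rewrite bandT //; right.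
- by rewrite addn1.
- by apply: IH; move: jb; case: (ltnP j K) => //= le_Kj; rewrite subSn // mulSn; lia.
Qed.

End BandedIterates.

(* a, b are 0-based ordinals; the paper's a, b are a.+1, b.+1 *)
Theorem lemma1 (p q : nat) (T : smx) (nu : 'M[C]_p) (xi : 'M[C]_q)
  (a : 'I_p) (b : 'I_q) :
  (0 < p)%N -> (0 < q)%N ->
  banded p q T ->
  is_trig_mx nu -> nu \in unitmx ->
  is_trig_mx xi -> xi \in unitmx ->
  forall n N : nat, (n%:Z <= dba p q a.+1 b.+1 N)%R ->
  \sum_(i < q) \sum_(j < p) uvec xi b i * spow q T n i j * uvec nu a j
  = (((vtrunc (uvec xi b) N)^T *m (trunc T N) ^+ n *m vtrunc (uvec nu a) N)
       ord0 ord0).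
Proof.
move=> p_gt0 q_gt0 bandT trig_nu unit_nu trig_xi unit_xi n N le_n_dba.
set K := nsteps p a N; set M := nsteps q b N.
have lt_n_KM : (n < K + M)%N.
  have := ceil_div_le_nsteps a N p_gt0; have := ceil_div_le_nsteps b N q_gt0.
  by move: le_n_dba; rewrite /dba; lia.
have y0 : forall k, (a < k)%N -> uvec nu a k = 0 := uvec_eq0 trig_nu unit_nu.
have x0 : forall k, (b < k)%N -> uvec xi b k = 0 := uvec_eq0 trig_xi unit_xi.
have supp_y j k : (j < K)%N -> (N < k)%N -> iter j (sapp q T) (uvec nu a) k = 0.
  by rewrite ltn_nsteps // => le_N lt_Nk; apply: (iter_sapp_eq0 bandT y0); lia.
transitivity (\sum_(i < q) uvec xi b i * iter n (sapp q T) (uvec nu a) i).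
  have y0p k : (p <= k)%N -> uvec nu a k = 0 by move/(leq_trans (ltn_ord a))/y0.
  apply: eq_bigr => i _; rewrite -(spow_mulv _ _ y0p) mulr_sumr.
  by apply: eq_bigr => j _; rewrite mulrA.
rewrite -mulmxA trunc_exp_mul_vtrunc mxE.
under [RHS]eq_bigr do rewrite !mxE.
apply: (sum_mul_trunc_agree x0) => //; apply: (iter_trunc_agree bandT supp_y).
by have [//|le_Kn] := ltnP n K; rewrite -ltn_nsteps //; lia.
Qed.
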